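(* For every $g\in\mathscr T'$, the map $e^{a(g_x)}:L^2_x(\mathbb R^3,\mathcal F_{\rm fin}(\mathscr T))\to L^2_x(\mathbb R^3,\mathcal F_{\rm fin}(\mathscr T))$ is injective.
   Context: $\mathscr T=C_0^\infty(\mathbb R^3\setminus\{0\})$, $\mathfrak h=L^2(\mathbb R^3,dk)$, $\mathscr T'$ the continuous antilinear functionals on $\mathscr T$, $\langle\varphi,f\rangle:=\overline{\varphi(f)}$ (equal to $\langle\varphi,f\rangle_{L^2}$ for $\varphi\in L^2$). $\mathcal F(L^2_k)$ is the symmetric Fock space over $L^2(\mathbb R^3,dk)$ and $\mathcal F_{\rm fin}(\mathscr T)$ the vectors with finitely many nonzero components, the $n$-th in the algebraic symmetric tensor product of $n$ copies of $\mathscr T$. $\mathcal N_0=L^2(\mathbb R^3_x)\otimes\mathcal F(L^2_k)\cong L^2(\mathbb R^3_x;\mathcal F(L^2_k))$, and $L^2_x(\mathbb R^3,\mathcal F_{\rm fin}(\mathscr T))$ denotes the space of (classes of) square-integrable functions $x\mapsto\Psi(x)$ with $\Psi(x)\in\mathcal F_{\rm fin}(\mathscr T)$ for a.e. $x$ (with number of nonzero components bounded uniformly in $x$). For $g\in\mathscr T'$ and $x\in\mathbb R^3$, $g_x:=e^{2\pi ik\cdot x}g\in\mathscr T'$, i.e. $\langle g_x,f\rangle=\langle g,e^{-2\pi ik\cdot x}f\rangle$. The operator $a(g_x)$ acts pointwise in $x$: $(a(g_x)\Psi(x))_n=\frac{\sqrt{n+1}}{(n+1)!}\sum_{\sigma\in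 S_{n+1}}\langle g_x,\psi_{\sigma(1)}(x)\rangle\psi_{\sigma(2)}(x)\otimes\cdots\otimes\psi_{\sigma(n+1)}(x)$ for $\Psi_{n+1}(x)=\psi_1(x)\otimes_s\cdots\otimes_s\psi_{n+1}(x)$ with $\psi_j(x)\in\mathscr T$, extended linearly; $e^{a(g_x)}:=\sum_k a(g_x)^k/k!$, a finite sum. *)

From HB Require Import structures.
From mathcomp Require Import all_boot all_order all_algebra all_fingroup.
From mathcomp Require Import all_classical all_reals all_analysis.
From mathcomp Require Import complex.
Import Order.TTheory GRing.Theory Num.Theory.
Import numFieldTopology.Exports numFieldNormedType.Exports.

Set Implicit Arguments.
Unset Strict Implicit.
Unset Printing Implicit Defensive.

Local Open Scope ring_scope.
Local Open Scope classical_set_scope.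

Section Defs.
Variable R : realType.

Local Notation C := (R[i]).

Definition R3 := (R * R * R)%type.
Definition R3m := (measurableTypeR R * measurableTypeR R * measurableTypeR R)%type.
Definition leb3 := ((@lebesgue_measure R) \x (@lebesgue_measure R)
                      \x (@lebesgue_measure R))%E.

Definition dot3 (k x : R3) : R := k.1.1 * x.1.1 + k.1.2 * x.1.2 + k.2 * x.2.

Definition rC (r : R) : C := (r%:C)%C.

Definition cexpi (t : R) : C := (cos t +i* sin t)%C.

Fixpoint Cn (n : nat) (f : R3 -> R) : Prop :=
  match n with
  | 0 => True
  | n'.+1 => (forall x, differentiable f x) /\ (forall v : R3, Cn n' ('D_v f))
  end.

Definition smooth (f : R3 -> R) : Prop := forall n, Cn n f.

(* f vanishes outside a compact set not containing 0, i.e. its support is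
   a compact subset of R^3 \ {0}. *)
Definition supported_in (K : set R3) (f : R3 -> C) : Prop :=
  forall k, ~ K k -> f k = 0.

Definition is_test (f : R3 -> C) : Prop :=
  smooth (fun k => complex.Re (f k)) /\ smooth (fun k => complex.Im (f k)) /\
  exists K : set R3, [/\ compact K, ~ K 0 & supported_in K f].

Definition coord_dirs : seq R3 := [:: (1, 0, 0); (0, 1, 0); (0, 0, 1)].

Definition Dlist (ds : seq R3) (h : R3 -> R) : R3 -> R :=
  foldr (fun v h' => 'D_v h') h ds.

Definition unif_to0 (u : nat -> R3 -> R) : Prop :=
  forall e : R, 0 < e -> \forall j \near \oo, forall k, `|u j k| < e.

(* convergence f_j -> 0 in the (LF) topology of C_0^oo(R^3 \ {0}) *)
Definition test_cvg0 (f : nat -> R3 -> C) : Prop :=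
  (forall j, is_test (f j)) /\
  (exists K : set R3, [/\ compact K, ~ K 0 & forall j, supported_in K (f j)]) /\
  (forall ds : seq R3, all (fun v => v \in coord_dirs) ds ->
     unif_to0 (fun j => Dlist ds (fun k => complex.Re (f j k))) /\
     unif_to0 (fun j => Dlist ds (fun k => complex.Im (f j k)))).

(* phi : T -> C is represented by a function on all of R^3 -> C, only its
   values on T matter. *)
Definition antilinear_on_T (phi : (R3 -> C) -> C) : Prop :=
  forall (c : C) (f h : R3 -> C), is_test f -> is_test h ->
    phi (fun k => c * f k + h k) = (c^*)%C * phi f + phi h.

Definition seq_continuous_on_T (phi : (R3 -> C) -> C) : Prop :=
  forall f : nat -> R3 -> C, test_cvg0 f ->
    (fun j => complex.Re (phi (f j))) @ \oo --> (0 : R) /\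
    (fun j => complex.Im (phi (f j))) @ \oo --> (0 : R).

Definition in_Tdual (phi : (R3 -> C) -> C) : Prop :=
  antilinear_on_T phi /\ seq_continuous_on_T phi.

Definition bracket (phi : (R3 -> C) -> C) (f : R3 -> C) : C := ((phi f)^*)%C.

(* g_x := e^{2 pi i k.x} g,  i.e.  <g_x, f> = <g, e^{-2 pi i k.x} f> *)
Definition gx (g : (R3 -> C) -> C) (x : R3) : (R3 -> C) -> C :=
  fun f => g (fun k => cexpi (- (2 * pi * dot3 k x)) * f k).

Definition cfg (n : nat) := 'I_n -> R3.

Definition fock := forall n : nat, cfg n -> C.

Definition kcons (n : nat) (k0 : R3) (k : cfg n) : cfg n.+1 :=
  fun i => if unlift ord0 i is Some j then k j else k0.

Definition symtensor (n : nat) (psi : 'I_n -> R3 -> C) : cfg n -> C :=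
  fun k => (n`!%:R)^-1 * \sum_(s : 'S_n) \prod_(i < n) psi (s i) (k i).

Definition in_alg_sym (n : nat) (F : cfg n -> C) : Prop :=
  exists r : seq (C * ('I_n -> R3 -> C)),
    (forall t, t \in r -> forall i, is_test (t.2 i)) /\
    F = (fun k => \sum_(t <- r) t.1 * symtensor t.2 k).

Definition in_Ffin (Psi : fock) : Prop :=
  (forall n, in_alg_sym (Psi n)) /\
  exists N : nat, forall n, (N <= n)%N -> Psi n = (fun _ => 0).

Definition annih (phi : (R3 -> C) -> C) (Psi : fock) : fock :=
  fun n k => rC (Num.sqrt (n.+1)%:R)
             * bracket phi (fun k0 => Psi n.+1 (kcons k0 k)).

Definition csum (u : nat -> C) : C :=
  (limn (series (fun j => complex.Re (u j))) +i*
   limn (series (fun j => complex.Im (u j))))%C.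

Definition expa (phi : (R3 -> C) -> C) (Psi : fock) : fock :=
  fun n k => csum (fun j => (j`!%:R)^-1 * iter j (annih phi) Psi n k).

Definition abs2 (z : C) : R := complex.Re z ^+ 2 + complex.Im z ^+ 2.

Fixpoint iterint (n : nat) : (cfg n -> \bar R) -> \bar R :=
  match n return (cfg n -> \bar R) -> \bar R with
  | 0 => fun F => F (fun _ => 0)
  | n'.+1 => fun F =>
      (\int[leb3]_k0 iterint (fun k : cfg n' => F (kcons k0 k)))%E
  end.

Definition fock_normsq (Psi : fock) : \bar R :=
  (\sum_(n <oo) iterint (fun k : cfg n => (abs2 (Psi n k))%:E))%E.

Definition in_L2x_Ffin (Psi : R3 -> fock) : Prop :=
  [/\ forall x, in_Ffin (Psi x),
      exists N : nat, forall x n, (N <= n)%N -> Psi x n = (fun _ => 0),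
      forall n (k : cfg n),
        measurable_fun [set: R3m] (fun x : R3m => complex.Re (Psi x n k)) /\
        measurable_fun [set: R3m] (fun x : R3m => complex.Im (Psi x n k))
    & (\int[leb3]_x fock_normsq (Psi x) < +oo)%E].

End Defs.

From HB Require Import structures.
From mathcomp Require Import all_boot all_order all_algebra all_fingroup.
From mathcomp Require Import all_classical all_reals all_analysis.
From mathcomp Require Import complex.
Import Order.TTheory GRing.Theory Num.Theory.
Import numFieldTopology.Exports numFieldNormedType.Exports.
Set Implicit Arguments.
Unset Strict Implicit.
Unset Printing Implicit Defensive.

Local Open Scope ring_scope.
Local Open Scope classical_set_scope.

(* The question is pointwise in x. For Psi in F_fin(T), the series defining
   e^{a(g_x)} Psi is a finite sum, and a(g_x)^j maps the (n+j)-particle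
   component to the n-particle one. Hence the n-particle component of
   e^{a(g_x)} Psi is Psi_n plus terms that involve only Psi_{n+1}, Psi_{n+2},
   ..., and Psi is recovered by downward induction from the highest nonzero
   component. *)

Section ExpaInjective.
Variable R : realType.
Local Notation C := R[i].
Local Notation functional := ((R3 R -> C) -> C).

Lemma Cn_cst n (c : R) : Cn n (fun _ : R3 R => c).
Proof.
elim: n c => [//|n IH] c /=; split => [x|v]; first exact: differentiable_cst.
have -> : 'D_v (fun _ : R3 R => c) = (fun _ => 0).
  by apply: funext => x; rewrite derive_cst.
exact: IH.
Qed.

Lemma is_test0 : is_test (fun _ : R3 R => 0 : C).
Proof.
split; first by move=> n; apply: Cn_cst.
split; first by move=> n; apply: Cn_cst.
by exists set0; split => //; exact: compact0.
Qed.

Lemma antilinear_on_T0 (phi : functional) : antilinear_on_T phi ->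
  phi (fun _ => 0) = 0.
Proof.
move=> /(_ 1 _ _ is_test0 is_test0).
under eq_fun do rewrite mulr0 addr0.
by rewrite conjc1 mul1r -{1}[phi _]addr0 => /addrI.
Qed.

Lemma gx0 (g : functional) : in_Tdual g -> forall x, gx g x (fun _ => 0) = 0.
Proof.
case=> /antilinear_on_T0 g0 _ x; rewrite /gx.
by under eq_fun do rewrite mulr0.
Qed.

Lemma limn_series_eventually0 (u : nat -> R) M :
  (forall j, (M <= j)%N -> u j = 0) -> limn (series u) = \sum_(j < M) u j.
Proof.
move=> u0; apply: lim_near_cst => //; near=> n.
have Mn : (M <= n)%N by near: n; exists M.
rewrite seriesEnat /= (@big_cat_nat _ _ _ M 0 n _ _ (leq0n M) Mn) /= big_mkord.
rewrite [X in _ + X]big_nat_cond [X in _ + X]big1 ?addr0 // => j.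
by case/andP=> /andP[Mj _] _; exact: u0.
Unshelve. all: end_near.
Qed.

Lemma csum_eventually0 (u : nat -> C) M :
  (forall j, (M <= j)%N -> u j = 0) -> csum u = \sum_(j < M) u j.
Proof.
move=> u0; rewrite /csum !(@limn_series_eventually0 _ M) => [|j /u0->//|j /u0->//].
elim: M {u0} => [|M IH]; first by rewrite !big_ord0.
by rewrite !big_ord_recr /= -IH; case: (u M).
Qed.

Definition vanishes_from (N : nat) (P : fock R) :=
  forall m, (N <= m)%N -> P m = (fun _ => 0).

Section Annihilation.
Variable phi : functional.

Lemma iter_annih_eq j n (P Q : fock R) :
  P (n + j)%N = Q (n + j)%N -> iter j (annih phi) P n = iter j (annih phi) Q n.
Proof.
elim: j n => [|j IH] n; first by rewrite addn0.
by rewrite -addSnnS => /IH eq_next; rewrite /= /annih eq_next.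
Qed.

Hypothesis phi0 : phi (fun _ => 0) = 0.

Lemma iter_annih0 j n (P : fock R) :
  P (n + j)%N = (fun _ => 0) -> iter j (annih phi) P n = (fun _ => 0).
Proof.
elim: j n => [|j IH] n; first by rewrite addn0.
rewrite -addSnnS => /IH eq0_next; apply: funext => k.
by rewrite /= /annih eq0_next /bracket phi0 conjc0 mulr0.
Qed.

Lemma expa_truncE N (P : fock R) n (k : cfg R n) : vanishes_from N P ->
  expa phi P k =
  P n k + \sum_(j < N) (j.+1`!%:R)^-1 * iter j.+1 (annih phi) P n k.
Proof.
move=> P0; rewrite /expa (@csum_eventually0 _ N.+1) => [|j Nj].
  by rewrite big_ord_recl /= invr1 mul1r.
by rewrite iter_annih0 ?mulr0 // P0 // (leq_trans (ltnW Nj)) ?leq_addl.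
Qed.

Lemma expa_inj_vanishing N (P Q : fock R) :
  vanishes_from N P -> vanishes_from N Q ->
  expa phi P = expa phi Q -> P = Q.
Proof.
move=> P0 Q0 eqPQ.
suff eq_above d n : (N <= n + d)%N -> P n = Q n.
  by apply: functional_extensionality_dep => n; apply: (eq_above N); rewrite leq_addl.
elim: d n => [|d IH] n Nnd; first by rewrite addn0 in Nnd; rewrite P0 // Q0.
have eq_iter j : iter j.+1 (annih phi) P n = iter j.+1 (annih phi) Q n.
  apply/iter_annih_eq/IH/(leq_trans Nnd).
  by rewrite -addnA leq_add2l addSn ltnS leq_addl.
apply: funext => k; have := congr1 (fun F => F n k) eqPQ.
rewrite /= (expa_truncE _ P0) (expa_truncE _ Q0).
under eq_bigr do rewrite eq_iter.
exact: addIr.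
Qed.

End Annihilation.
End ExpaInjective.

Theorem proposition4p8 (R : realType) (g : (R3 R -> R[i]) -> R[i]) :
  in_Tdual g ->
  forall Psi Phi : R3 R -> fock R,
    in_L2x_Ffin Psi -> in_L2x_Ffin Phi ->
    {ae @leb3 R, forall x : R3m R, expa (gx g x) (Psi x) = expa (gx g x) (Phi x)} ->
    {ae @leb3 R, forall x : R3m R, Psi x = Phi x}.
Proof.
move=> gT Psi Phi [Psi_fin _ _ _] [Phi_fin _ _ _]; apply: filterS => x.
have [_ [N1 Psi0]] := Psi_fin x; have [_ [N2 Phi0]] := Phi_fin x.
apply: (expa_inj_vanishing (gx0 gT x) (N := maxn N1 N2)) => n.
  by rewrite geq_max => /andP[/Psi0].
by rewrite geq_max => /andP[_ /Phi0].
Qed.
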